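(* Let $(\mathfrak{g},[\cdot,\cdot]_{\mathfrak{g}})$ be a Leibniz algebra, $(V;\rho^L,\rho^R)$ a representation, $T$ a relative Rota-Baxter operator, and $x\in\mathfrak{g}$ a Nijenhuis element associated to $T$. Then $\rho^L(x)$ is a Nijenhuis operator on the Leibniz algebra $(V,[\cdot,\cdot]_T)$, where $[u,v]_T=\rho^L(Tu)v+\rho^R(Tv)u$.
   Context: A Leibniz algebra is a vector space $\mathfrak{g}$ with bilinear $[\cdot,\cdot]_{\mathfrak{g}}$ satisfying $[x,[y,z]_{\mathfrak{g}}]_{\mathfrak{g}}=[[x,y]_{\mathfrak{g}},z]_{\mathfrak{g}}+[y,[x,z]_{\mathfrak{g}}]_{\mathfrak{g}}$. A representation $(V;\rho^L,\rho^R)$: linear $\rho^L,\rho^R:\mathfrak{g}\to\mathfrak{gl}(V)$ with $\rho^L([x,y]_{\mathfrak{g}})=[\rho^L(x),\rho^L(y)]$, $\rho^R([x,y]_{\mathfrak{g}})=[\rho^L(x),\rho^R(y)]$, $\rho^R(y)\rho^L(x)=-\rho^R(y)\rho^R(x)$. A relative Rota-Baxter operator is a linear $T:V\to\mathfrak{g}$ with $[Tv_1,Tv_2]_{\mathfrak{g}}=T(\rho^L(Tv_1)v_2+\rho^R(Tv_2)v_1)$; $(V,[\cdot,\cdot]_T)$ is then a Leibniz algebra. An element $x\in\mathfrak{g}$ is a Nijenhuis element associated to $T$ if for all $y,z\in\mathfrak{g}$, $u\in V$: $[[x,y]_{\mathfrak{g}},[x,z]_{\mathfrak{g}}]_{\mathfrak{g}}=0$,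 $\rho^L([x,y]_{\mathfrak{g}})\rho^L(x)=0$, $\rho^R([x,y]_{\mathfrak{g}})\rho^L(x)=0$, and $[x,T\rho^L(x)u-[x,Tu]_{\mathfrak{g}}]_{\mathfrak{g}}=0$. A Nijenhuis operator on a Leibniz algebra $(A,[\cdot,\cdot])$ is a linear $N:A\to A$ with $[Na,Nb]=N([Na,b]+[a,Nb]-N[a,b])$ for all $a,b\in A$. *)

From mathcomp Require Import all_boot all_algebra.
Set Implicit Arguments. Unset Strict Implicit. Unset Printing Implicit Defensive.
Import GRing.Theory.
Local Open Scope ring_scope.

Definition is_linear (K : fieldType) (U W : lmodType K) (f : U -> W) : Prop :=
  forall (a : K) (u v : U), f (a *: u + v) = a *: f u + f v.

Definition is_bilinear (K : fieldType) (U1 U2 W : lmodType K)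
  (b : U1 -> U2 -> W) : Prop :=
  (forall y, is_linear (fun x => b x y)) /\ (forall x, is_linear (b x)).

Definition leibniz_identity (K : fieldType) (g : lmodType K)
  (br : g -> g -> g) : Prop :=
  forall x y z, br x (br y z) = br (br x y) z + br y (br x z).

Definition leibniz_algebra (K : fieldType) (g : lmodType K)
  (br : g -> g -> g) : Prop :=
  is_bilinear br /\ leibniz_identity br.

Definition leibniz_rep (K : fieldType) (g V : lmodType K)
  (br : g -> g -> g) (rhoL rhoR : g -> V -> V) : Prop :=
  [/\ is_bilinear rhoL, is_bilinear rhoR,
      (forall x y v, rhoL (br x y) v = rhoL x (rhoL y v) - rhoL y (rhoL x v)),
      (forall x y v, rhoR (br x y) v = rhoL x (rhoR y v) - rhoR y (rhoL x v)) &
      (forall x y v, rhoR y (rhoL x v) = - rhoR y (rhoR x v))].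

Definition relative_RB (K : fieldType) (g V : lmodType K)
  (br : g -> g -> g) (rhoL rhoR : g -> V -> V) (T : V -> g) : Prop :=
  is_linear T /\
  forall v1 v2, br (T v1) (T v2) = T (rhoL (T v1) v2 + rhoR (T v2) v1).

Definition bracketT (K : fieldType) (g V : lmodType K)
  (rhoL rhoR : g -> V -> V) (T : V -> g) : V -> V -> V :=
  fun u v => rhoL (T u) v + rhoR (T v) u.

Definition nijenhuis_element (K : fieldType) (g V : lmodType K)
  (br : g -> g -> g) (rhoL rhoR : g -> V -> V) (T : V -> g) (x : g) : Prop :=
  [/\ (forall y z, br (br x y) (br x z) = 0),
      (forall y v, rhoL (br x y) (rhoL x v) = 0),
      (forall y v, rhoR (br x y) (rhoL x v) = 0) &
      (forall u, br x (T (rhoL x u) - br x (T u)) = 0)].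

Definition nijenhuis_operator (K : fieldType) (A : lmodType K)
  (br : A -> A -> A) (N : A -> A) : Prop :=
  is_linear N /\
  forall a b, br (N a) (N b) = N (br (N a) b + br a (N b) - N (br a b)).

From mathcomp Require Import all_boot all_algebra.
Set Implicit Arguments. Unset Strict Implicit. Unset Printing Implicit Defensive.
Import GRing.Theory.
Local Open Scope ring_scope.

(* With N := rhoL x, both rho = rhoL and rho = rhoR satisfy
   rho [x, a] = N o rho a - rho a o N.  Applying this twice, together with
   [x, T (N u)] = [x, [x, T u]] and rho [x, y] o N = 0 (both from the
   Nijenhuis-element conditions), moves N out of rho (T (N u)) (N v); the
   terms produced are exactly those of the Nijenhuis identity for [.,.]_T. *)

Section LinearMaps.
Variables (K : fieldType) (U W : lmodType K) (f : U -> W).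
Hypothesis f_linear : is_linear f.

Lemma is_linearD u v : f (u + v) = f u + f v.
Proof. by rewrite -{1}(scale1r u) f_linear scale1r. Qed.

Lemma is_linearB u v : f (u - v) = f u - f v.
Proof. by rewrite addrC -scaleN1r f_linear scaleN1r addrC. Qed.

End LinearMaps.

Lemma nijenhuis_element_brT (K : fieldType) (g V : lmodType K)
    (br : g -> g -> g) (rhoL rhoR : g -> V -> V) (T : V -> g) (x : g) :
  is_linear (br x) -> nijenhuis_element br rhoL rhoR T x ->
  forall u, br x (T (rhoL x u)) = br x (br x (T u)).
Proof.
move=> brx_linear [_ _ _ brxT] u; apply/eqP.
by rewrite -subr_eq0 -(is_linearB brx_linear) brxT.
Qed.

Section CommuteAction.
Variables (K : fieldType) (g V : lmodType K) (br : g -> g -> g).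
Variables (sigma : g -> V -> V) (x : g) (N : V -> V).
Hypothesis N_linear : is_linear N.
Hypothesis sigma_br_x : forall a w, sigma (br x a) w = N (sigma a w) - sigma a (N w).
Hypothesis sigma_br_x_N : forall y w, sigma (br x y) (N w) = 0.

Lemma sigma_N_commute b c w : br x b = br x (br x c) ->
  sigma b (N w) = N (sigma b w - N (sigma c w) + sigma c (N w)).
Proof.
move=> brxb; have -> : sigma b (N w) = N (sigma b w) - sigma (br x b) w.
  by rewrite sigma_br_x subKr.
rewrite brxb sigma_br_x sigma_br_x_N subr0 sigma_br_x -!is_linearB //.
by rewrite opprB addrA addrAC.
Qed.

End CommuteAction.

Theorem proposition3p11 (K : fieldType) (g V : lmodType K)
  (br : g -> g -> g) (rhoL rhoR : g -> V -> V) (T : V -> g) (x : g) :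
  leibniz_algebra br ->
  leibniz_rep br rhoL rhoR ->
  relative_RB br rhoL rhoR T ->
  nijenhuis_element br rhoL rhoR T x ->
  nijenhuis_operator (bracketT rhoL rhoR T) (rhoL x).
Proof.
move=> [[_ br_linear] _] [[_ rhoL_linear] _ rhoL_br rhoR_br _] _ nx.
have N_linear := rhoL_linear x.
have brxT := nijenhuis_element_brT (br_linear x) nx.
have [_ rhoL_brx_N rhoR_brx_N _] := nx.
split=> // u v; rewrite /bracketT.
rewrite (sigma_N_commute N_linear (rhoL_br x) rhoL_brx_N _ (brxT u)).
rewrite (sigma_N_commute N_linear (rhoR_br x) rhoR_brx_N _ (brxT v)).
rewrite -(is_linearD N_linear); congr (rhoL x _).
rewrite (is_linearD N_linear) opprD !addrA.
by rewrite [LHS](ACl (1*6*3*4*2*5)).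
Qed.
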